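(* Let $G$ be a connected graph that is not a path, and let $B$ be (the vertex set of) a block of $G$ which is not a cut edge of a pendant path of $G$. Then every connected forcing set of $G$ contains at least $\delta(G[B])$ vertices of $B$.
   Context: Zero forcing: given a graph $G$ and a set $S$ of initially colored vertices, if a colored vertex $u$ has exactly one uncolored neighbor $v$, then $v$ becomes colored. $S$ is a zero forcing set if repeated application colors all vertices. A connected forcing set is a zero forcing set $S$ with $G[S]$ connected. A block is a maximal subgraph with no articulation point (cut vertex). A pendant path attached to a vertex $v$ is a set $P\subset V$ such that $G[P]$ is a path component of $G-v$, one of whose ends is adjacent to $v$ in $G$; a cut edge of a pendant path is an edge of the path $G[P\cup\{v\}]$ (a single-edge block lying on the pendant path together with the vertex it is attached to). $\delta(H)$ denotes the minimum degree of $H$. *)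

From mathcomp Require Import all_boot.
Set Implicit Arguments. Unset Strict Implicit. Unset Printing Implicit Defensive.

(* A simple graph on a finite vertex type T is given by a relation e
   (assumed symmetric and irreflexive in the theorem). Vertex subsets are
   {set T}; G[A] is the subgraph induced by A. *)
Section GraphDefs.
Variables (T : finType) (e : rel T).

Definition ind_rel (A : {set T}) : rel T :=
  fun x y => [&& e x y, x \in A & y \in A].

(* G[A] is connected (the empty graph counts as connected) *)
Definition connected_set (A : {set T}) : Prop :=
  forall x y, x \in A -> y \in A -> connect (ind_rel A) x y.

Definition force_step (S : {set T}) : {set T} :=
  S :|: [set v | [exists u, [&& u \in S, e u v &
                   [forall w, e u w ==> (w \in S) || (w == v)]]]].

Definition zf_closure (S : {set T}) : {set T} := iter #|T| force_step S.

Definition zero_forcing_set (S : {set T}) : Prop := zf_closure S = setT.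

Definition connected_forcing_set (S : {set T}) : Prop :=
  zero_forcing_set S /\ connected_set S.

Definition nonseparable (A : {set T}) : Prop :=
  A != set0 /\ connected_set A /\
  forall v, v \in A -> connected_set (A :\ v).

Definition block (B : {set T}) : Prop :=
  nonseparable B /\ forall A : {set T}, B \subset A -> nonseparable A -> A = B.

Definition deg_in (A : {set T}) (v : T) : nat := #|[set w in A | e v w]|.
Definition mindeg (A : {set T}) : nat := \big[minn/#|T|]_(v in A) deg_in A v.

Definition seq_adj (s : seq T) (x y : T) : Prop :=
  exists i, i.+1 < size s /\
    ((nth x s i = x /\ nth x s i.+1 = y) \/ (nth x s i = y /\ nth x s i.+1 = x)).

Definition path_enum (A : {set T}) (s : seq T) : Prop :=
  uniq s /\ s != [::] /\ (forall x, (x \in A) = (x \in s)) /\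
  forall x y, x \in A -> y \in A -> (e x y <-> seq_adj s x y).

Definition is_path_graph (A : {set T}) : Prop := exists s, path_enum A s.

(* P is a pendant path attached to v: G[P] is a path component of G - v,
   one of whose ends is adjacent to v *)
Definition pendant_path (v : T) (P : {set T}) : Prop :=
  v \notin P /\ connected_set P /\
  (forall x y, x \in P -> y \notin P -> y != v -> ~~ e x y) /\
  exists x s, path_enum P (x :: s) /\ (e v x || e v (last x s)).

Definition cut_edge_of_pendant_path (B : {set T}) : Prop :=
  exists v P x y, pendant_path v P /\ x != y /\ e x y /\
    x \in v |: P /\ y \in v |: P /\ B = [set x; y].

End GraphDefs.

From mathcomp Require Import all_boot zify.
Set Implicit Arguments. Unset Strict Implicit. Unset Printing Implicit Defensive.

(* Let w be the first vertex of B outside S to be colored, forced by u.  If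
   u is in B, then u and all its B-neighbours other than w were colored before
   w, hence lie in S, so deg_B u <= |S :&: B|.  Otherwise the component Y of u
   in G - w misses B (a path through Y would attach an ear to the block B), and
   since colors can enter Y only through w, Y meets S; as S is connected and
   avoids w, S lies inside Y.  Outside Y the coloring then proceeds as a single
   chain starting at w, each new vertex forced by the previous one, so G - Y is
   a path hanging from w.  If delta(G[B]) > 0, the block B lies in it and is its
   first edge, a cut edge of a pendant path. *)

Section InducedConnectivity.
Variables (T : finType) (e : rel T).
Hypothesis e_sym : symmetric e.
Implicit Types A X : {set T}.

Lemma ind_rel_sym A : symmetric (ind_rel e A).
Proof.
by move=> x y; rewrite /ind_rel e_sym; case: (x \in A); case: (y \in A); rewrite ?andbF.
Qed.

Lemma connect_ind_sym A x y : connect (ind_rel e A) x y = connect (ind_rel e A) y x.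
Proof. exact/sym_connect_sym/ind_rel_sym. Qed.

Lemma connect_ind_edge A x y :
  x \in A -> y \in A -> e x y -> connect (ind_rel e A) x y.
Proof. by move=> xA yA exy; apply: connect1; rewrite /ind_rel exy xA yA. Qed.

Lemma connect_ind_sub A A' x y :
  A \subset A' -> connect (ind_rel e A) x y -> connect (ind_rel e A') x y.
Proof.
move=> sAA'; apply: connect_sub => a b /and3P [eab aA bA].
by apply: connect_ind_edge; rewrite ?(subsetP sAA').
Qed.

Lemma connect_ind_closed A (Q : pred T) x y :
  (forall a b, a \in A -> b \in A -> e a b -> Q a -> Q b) ->
  connect (ind_rel e A) x y -> Q x -> Q y.
Proof.
move=> QA /connectP [p + ->]; elim: p x => //= a p IHp x.
by case/andP=> /and3P [exa xA aA] pa Qx; apply: IHp pa (QA x a _ _ _ _).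
Qed.

Lemma connect_ind_mem A x y : connect (ind_rel e A) x y -> x \in A -> y \in A.
Proof. exact: connect_ind_closed. Qed.

Lemma connect_ind_exit A X x y :
  connect (ind_rel e A) x y -> x \in X -> y \notin X ->
  exists a b, [/\ a \in A, b \in A, a \in X, b \notin X & e a b].
Proof.
move=> cxy xX yX.
have [/existsP [a /existsP [b /and5P [aA bA aX bX eab]]] | noexit] :=
  boolP [exists a, exists b, [&& a \in A, b \in A, a \in X, b \notin X & e a b]].
  by exists a, b.
case/negP: yX; apply: connect_ind_closed _ cxy xX => a b aA bA eab aX.
apply: contraT => bX; case/negP: noexit.
by apply/existsP; exists a; apply/existsP; exists b; apply/and5P.
Qed.

Lemma connected_set_hub A h :
  h \in A -> (forall y, y \in A -> connect (ind_rel e A) h y) -> connected_set e A.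
Proof.
move=> hA hA_conn x y xA yA.
by apply: (connect_trans (y := h)); [rewrite connect_ind_sym|]; apply: hA_conn.
Qed.

Definition component A x := [set y | connect (ind_rel e A) x y].

Lemma component_id A x : x \in component A x.
Proof. by rewrite inE connect0. Qed.

Lemma component_sub A x : x \in A -> component A x \subset A.
Proof. by move=> xA; apply/subsetP => y; rewrite inE => /connect_ind_mem; apply. Qed.

Lemma component_closed A x a b :
  a \in component A x -> a \in A -> b \in A -> e a b -> b \in component A x.
Proof.
rewrite !inE => cxa aA bA eab.
by apply: connect_trans cxa _; apply: connect_ind_edge.
Qed.

Lemma connected_component A x : x \in A -> connected_set e (component A x).
Proof.
move=> xA; apply: (connected_set_hub (component_id A x)) => y; rewrite inE => cxy.
apply: (connect_ind_closed (Q := connect (ind_rel e (component A x)) x) _ cxy);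
  last exact: connect0.
move=> a b aA bA eab cxa.
have aC : a \in component A x by rewrite inE (connect_ind_sub (component_sub xA) cxa).
apply: connect_trans cxa (connect_ind_edge aC _ eab).
exact: component_closed aC aA bA eab.
Qed.

Definition fenced (w : T) (U : {set T}) := forall x y, x \in U -> y \notin U -> e x y -> y = w.

Lemma notin_component_setC1 w u : u != w -> w \notin component (~: [set w]) u.
Proof.
move=> uw; have uA : u \in ~: [set w] by rewrite !inE.
by apply/negP => /(subsetP (component_sub uA)); rewrite !inE eqxx.
Qed.

Lemma component_setC1_fenced w u : u != w -> fenced w (component (~: [set w]) u).
Proof.
move=> uw x y xC yC exy; apply/eqP; apply: contraNT yC => yw.
apply: component_closed (xC) _ _ exy; rewrite !inE ?yw //.
by apply: contraNneq (notin_component_setC1 uw) => xw; rewrite xw in xC.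
Qed.

Lemma fenced_setCD1 w U : fenced w U -> fenced w (~: U :\ w).
Proof.
move=> fU x y; rewrite !inE negb_and !negbK => /andP [xw xU] /orP [/eqP // | yU] exy.
have xw' : x = w by apply: fU yU xU _; rewrite e_sym.
by rewrite xw' eqxx in xw.
Qed.

Lemma fenced_connected_mem w U X x y :
  fenced w U -> connected_set e X -> x \in X -> y \in X -> x \in U -> y \notin U ->
  w \in X.
Proof.
move=> fU cX xX yX xU yU.
have [a [b [_ bX aU bU eab]]] := connect_ind_exit (cX _ _ xX yX) xU yU.
by rewrite -(fU _ _ aU bU eab).
Qed.

End InducedConnectivity.

Section Ears.
Variables (T : finType) (e : rel T).
Hypothesis e_sym : symmetric e.
Implicit Types B K Y : {set T}.

Definition ear B K := [/\ [disjoint K & B], connected_set e K &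
  exists k1 k2 a1 a2, [/\ k1 \in K, k2 \in K, a1 \in B, a2 \in B &
                         [/\ a1 != a2, e k1 a1 & e k2 a2]]].

Lemma connected_setD K Y v :
  connected_set e K -> v \in K :\: Y ->
  (forall a b, a \in Y -> b \in K :\: Y -> e a b -> b = v) ->
  connected_set e (K :\: Y).
Proof.
move=> cK vKY fY; apply: (connected_set_hub e_sym vKY) => z zKY.
have [zK zY] := setDP zKY; have [vK _] := setDP vKY.
suff : (z \in Y) || connect (ind_rel e (K :\: Y)) v z by rewrite (negbTE zY).
apply: (connect_ind_closed
  (Q := fun t => (t \in Y) || connect (ind_rel e (K :\: Y)) v t) _ (cK _ _ vK zK));
  last by rewrite connect0 orbT.
move=> a b aK bK eab /orP [aY | cva]; have [bY | bY] := boolP (b \in Y) => //=.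
  by rewrite (fY a b) ?connect0 // inE bY.
have aKY := connect_ind_mem cva vKY.
by apply: connect_trans cva (connect_ind_edge _ _ eab); rewrite // inE bY.
Qed.

Lemma ear_union_connected B K :
  connected_set e B -> ear B K -> connected_set e (B :|: K).
Proof.
move=> cB [_ cK [k1 [_ [a1 [_ [k1K _ a1B _ [_ ek1 _]]]]]]].
have a1U : a1 \in B :|: K by rewrite inE a1B.
apply: (connected_set_hub e_sym a1U) => y; case/setUP => [yB | yK].
  exact: connect_ind_sub (subsetUl B K) (cB _ _ a1B yB).
apply: (connect_trans (y := k1)).
  by apply: connect_ind_edge; rewrite ?inE ?a1B ?k1K ?orbT // e_sym.
exact: connect_ind_sub (subsetUr B K) (cK _ _ k1K yK).
Qed.

Lemma ear_union_setD1_block B K v :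
  nonseparable e B -> ear B K -> v \in B -> connected_set e ((B :|: K) :\ v).
Proof.
move=> [_ [_ cBv]] [dKB cK [k1 [k2 [a1 [a2 [k1K k2K a1B a2B [a12 ek1 ek2]]]]]]] vB.
have [a [k [aB kK av eka]]] : exists a k, [/\ a \in B, k \in K, a != v & e k a].
  case: (eqVneq a1 v) => [a1v | a1v]; last by exists a1, k1.
  by exists a2, k2; rewrite -a1v eq_sym.
have sBv : B :\ v \subset (B :|: K) :\ v by apply: setSD; apply: subsetUl.
have sK : K \subset (B :|: K) :\ v.
  apply/subsetP => y yK; rewrite !inE yK orbT andbT.
  by apply: contraTneq yK => ->; rewrite (disjointFl dKB vB).
have aA : a \in (B :|: K) :\ v by rewrite !inE av aB.
apply: (connected_set_hub e_sym aA) => y; rewrite !inE => /andP [yv /orP [yB | yK]].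
  by apply: connect_ind_sub sBv (cBv _ vB _ _ _ _); rewrite !inE ?av ?yv.
apply: (connect_trans (y := k)).
  by apply: connect_ind_edge; rewrite // ?(subsetP sK) // e_sym.
exact: connect_ind_sub sK (cK _ _ kK yK).
Qed.

Lemma ear_setD_component B K v x (A := (B :|: K) :\ v) :
  ear B K -> v \in K -> x \in A -> [disjoint component e A x & B] ->
  ear B (K :\: component e A x).
Proof.
set Y := component e A x.
move=> [dKB cK [k1 [k2 [a1 [a2 [k1K k2K a1B a2B [a12 ek1 ek2]]]]]]] vK xA dYB.
have vY : v \notin Y by apply/negP => /(subsetP (component_sub e xA)); rewrite !inE eqxx.
have KY_in k a : k \in K -> a \in B -> e k a -> k \in K :\: Y.
  move=> kK aB eka; rewrite inE kK andbT.
  have [-> // | kv] := eqVneq k v.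
  have aA : a \in A.
    by rewrite !inE aB andbT; apply: contraTneq aB => ->; rewrite (disjointFr dKB vK).
  apply/negP => kY; have aY : a \in Y.
    by apply: component_closed kY _ aA eka; rewrite !inE kv kK orbT.
  by move: (disjointFr dYB aY); rewrite aB.
split; first by apply: disjointWl dKB; exact: subsetDl.
  have vKY : v \in K :\: Y by rewrite inE vY vK.
  apply: connected_setD cK vKY _ => a b aY; rewrite inE => /andP [bY bK] eab.
  apply/eqP; apply: contraNT bY => bv.
  apply: component_closed aY (subsetP (component_sub e xA) _ aY) _ eab.
  by rewrite !inE bv bK orbT.
by exists k1, k2, a1, a2; split; [exact: KY_in ek1 | exact: KY_in ek2 | | |].
Qed.

(* If deleting v disconnects B :|: K, the part cut off from B lies in K, and
   removing it from K leaves a smaller ear. *)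
Lemma smallest_ear_union_setD1_ear B K v :
  connected_set e B -> ear B K -> (forall K', ear B K' -> #|K| <= #|K'|) ->
  v \in K -> connected_set e ((B :|: K) :\ v).
Proof.
move=> cB earK minK vK; set A := (B :|: K) :\ v.
have [dKB _ [_ [_ [a1 [_ [_ _ a1B _ _]]]]]] := earK.
have sBA : B \subset A.
  apply/subsetP => b bB; rewrite !inE bB andbT.
  by apply: contraTneq bB => ->; rewrite (disjointFr dKB vK).
have a1A : a1 \in A := subsetP sBA _ a1B.
have [sub | /subsetPn [x xA xa1]] := boolP (A \subset component e A a1).
  by apply: (connected_set_hub e_sym a1A) => y /(subsetP sub); rewrite inE.
have dYB : [disjoint component e A x & B].
  rewrite disjoint_subset; apply/subsetP => b; rewrite !inE => cxb.
  apply: contra xa1 => bB; rewrite inE.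
  apply: connect_trans (connect_ind_sub sBA (cB _ _ a1B bB)) _.
  by rewrite connect_ind_sym.
have xK : x \in K.
  move: xA; rewrite !inE => /andP [_ /orP [xB | //]].
  by move: (disjointFr dYB (component_id e A x)); rewrite xB.
have : #|K :\: component e A x| < #|K|.
  apply/proper_card/properP; split; first exact: subsetDl.
  by exists x; rewrite // inE component_id.
by rewrite ltnNge minK //; apply: ear_setD_component.
Qed.

Lemma smallest_ear_nonseparable B K :
  nonseparable e B -> ear B K -> (forall K', ear B K' -> #|K| <= #|K'|) ->
  nonseparable e (B :|: K).
Proof.
move=> nsB earK minK; have [B0 [cB _]] := nsB.
split; first by have /set0Pn [b bB] := B0; apply/set0Pn; exists b; rewrite inE bB.
split; first exact: ear_union_connected.
move=> v; case/setUP => [vB | vK].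
  exact: ear_union_setD1_block.
exact: smallest_ear_union_setD1_ear.
Qed.

Lemma block_no_ear B K : block e B -> ~ ear B K.
Proof.
move=> [nsB maxB]; elim: {K}#|K| {-2}K (leqnn #|K|) => [|n IHn] K sizeK earK.
  case: earK => _ _ [k1 [_ [_ [_ [k1K _ _ _ _]]]]].
  by move: sizeK; rewrite leqn0 => /eqP/card0_eq/(_ k1); rewrite k1K.
have minK : forall K', ear B K' -> #|K| <= #|K'|.
  move=> K' earK'; rewrite leqNgt; apply/negP => ltK'.
  by apply: (IHn K') earK'; rewrite -ltnS (leq_trans ltK').
have := maxB _ (subsetUl B K) (smallest_ear_nonseparable nsB earK minK).
case: earK => dKB _ [k1 [_ [_ [_ [k1K _ _ _ _]]]]] BKB.
by move: (disjointFr dKB k1K); rewrite -BKB inE k1K orbT.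
Qed.

Lemma block_disjoint_component_setC1 B w u :
  block e B -> w \in B -> u \notin B -> e u w ->
  [disjoint component e (~: [set w]) u & B].
Proof.
move=> blockB wB uB euw; rewrite disjoint_subset; apply/subsetP => b; rewrite !inE => cub.
apply/negP => bB.
set K := component e (~: B) u.
have uK : u \in ~: B by rewrite inE.
have sKB : K \subset ~: B := component_sub e uK.
have bK : b \notin K by apply: contraL bB => /(subsetP sKB); rewrite inE.
have [a [a' [_ a'w aK a'K eaa']]] := connect_ind_exit cub (component_id e _ u) bK.
have a'B : a' \in B.
  apply: contraNT a'K => a'B; apply: component_closed (aK) _ _ eaa'.
    exact: subsetP sKB _ aK.
  by rewrite inE.
apply: (block_no_ear (K := K) blockB); split.
- by rewrite disjoint_subset; apply/subsetP => y /(subsetP sKB); rewrite !inE.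
- exact: connected_component.
- exists u, a, w, a'; split; rewrite ?component_id //; split => //.
  by move: a'w; rewrite !inE eq_sym.
Qed.
End Ears.

Section Forcing.
Variables (T : finType) (e : rel T).
Hypothesis e_sym : symmetric e.
Variable S : {set T}.
Implicit Types U X : {set T}.

Definition colored k := iter k (force_step e) S.

Lemma force_step_sub X : X \subset force_step e X.
Proof. exact: subsetUl. Qed.

Lemma colored_mono : {homo colored : i j / i <= j >-> i \subset j}.
Proof.
apply: homo_leq => [A | ? ? ? | k]; [exact: subxx | exact: subset_trans |].
exact: force_step_sub.
Qed.

Lemma force_stepP X z : z \in force_step e X -> z \notin X ->
  exists u, [/\ u \in X, e u z & forall y, e u y -> (y \in X) || (y == z)].
Proof.
case/setUP => [-> // | ]; rewrite inE => /existsP [u /and3P [uX euz /forallP uz]] _.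
by exists u; split => // y euy; move: (uz y); rewrite euy.
Qed.

Lemma force_step_fenced U w X :
  fenced e w U -> w \notin X -> [disjoint U & X] -> [disjoint U & force_step e X].
Proof.
move=> fU wX dUX; rewrite disjoint_subset; apply/subsetP => x xU; rewrite inE.
apply/negP => xF; have [u [uX eux _]] := force_stepP xF (negbT (disjointFr dUX xU)).
have uU : u \notin U by apply: contraL uX => uU; rewrite (disjointFr dUX uU).
have uw : u = w by apply: fU xU uU _; rewrite e_sym.
by move: wX; rewrite -uw uX.
Qed.

Lemma colored_fenced U w k :
  fenced e w U -> [disjoint U & S] -> w \notin colored k -> [disjoint U & colored k.+1].
Proof.
move=> fU dUS; elim: k => [|k IHk] wk; first exact: (force_step_fenced fU wk dUS).
apply: force_step_fenced fU (wk) (IHk _); apply: contra wk.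
exact/subsetP/colored_mono.
Qed.

Lemma fenced_meets_seed U w k x :
  fenced e w U -> w \notin colored k -> x \in U -> x \in colored k ->
  exists2 s, s \in S & s \in U.
Proof.
move=> fU wk xU xk; have [/pred0Pn [s /andP [sU sS]] | dUS] := boolP (~~ [disjoint U & S]).
  by exists s.
case: k wk xk => [|k] wk xk; first by exists x.
have wk' : w \notin colored k by apply: contra wk; exact/subsetP/colored_mono.
by move: xk; rewrite (disjointFr (colored_fenced fU (negbNE dUS) wk') xU).
Qed.

Lemma first_forced X x k : [disjoint X & S] -> x \in X -> x \in colored k ->
  exists j w u, [/\ j < k, w \in X, w \notin colored j, w \in colored j.+1 &
                    [/\ [disjoint X & colored j], u \in colored j, e u w &
                        forall y, e u y -> (y \in colored j) || (y == w)]].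
Proof.
move=> dXS xX xk.
have exj : exists j, [exists y, (y \in X) && (y \in colored j)].
  by exists k; apply/existsP; exists x; rewrite xX.
case: (ex_minnP exj) => -[|j] /existsP [w /andP [wX wj]] minj.
  by move: wj; rewrite /= (disjointFr dXS wX).
have dXj : [disjoint X & colored j].
  rewrite disjoint_subset; apply/subsetP => y yX; rewrite inE; apply/negP => yj.
  have : j.+1 <= j by apply: minj; apply/existsP; exists y; rewrite yX yj.
  by rewrite ltnn.
have wj' : w \notin colored j by rewrite (disjointFr dXj wX).
have [u [uj euw uw]] := force_stepP wj wj'.
by exists j, w, u; split=> //; apply: minj; apply/existsP; exists x; rewrite xX xk.
Qed.
End Forcing.

Section ForwardClosed.
Variables (T : finType) (e : rel T).
Hypotheses (e_sym : symmetric e) (e_irr : irreflexive e).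

Definition forward_closed (A : {set T}) (s : seq T) :=
  forall x z, x \in s -> (index x s).+1 < size s -> z \in A -> e x z ->
    index z s <= (index x s).+1.

Lemma index_rcons_mem (s : seq T) x z : x \in s -> index x (rcons s z) = index x s.
Proof. by move=> xs; rewrite -cats1 index_cat xs. Qed.

Lemma forward_closed_rcons A x0 p z :
  forward_closed A (x0 :: p) -> z \notin x0 :: p ->
  (forall y, y \in A -> e (last x0 p) y -> y \in rcons (x0 :: p) z) ->
  forward_closed A (rcons (x0 :: p) z).
Proof.
set s := x0 :: p => fwd zs lastN x y; rewrite mem_rcons inE size_rcons ltnS.
case/orP => [/eqP -> | xs]; first by rewrite -cats1 index_cat (negbTE zs) /= eqxx addn0 ltnn.
rewrite (index_rcons_mem _ xs) => ixs yA exy.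
have [lt | ge] := ltnP (index x s).+1 (size s).
  have ys : y \in s by rewrite -index_mem (leq_ltn_trans (fwd _ _ xs lt yA exy)).
  by rewrite index_rcons_mem // fwd.
have xl : x = last x0 p.
  have nl : nth x0 s (size p) = last x0 p := nth_last x0 s.
  rewrite -nl -{1}(nth_index x0 xs); congr nth; rewrite /s /= in ixs ge *; lia.
have : index y (rcons s z) < size (rcons s z) by rewrite index_mem lastN // -xl.
by rewrite size_rcons ltnS => /leq_trans; apply; rewrite /s /= in ixs ge *; lia.
Qed.

Lemma forward_closed_seq_adj A x0 p :
  uniq (x0 :: p) -> path e x0 p -> forward_closed A (x0 :: p) -> {subset x0 :: p <= A} ->
  forall x y, x \in x0 :: p -> y \in x0 :: p -> e x y <-> seq_adj (x0 :: p) x y.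
Proof.
set s := x0 :: p => us pth fwd sA x y xs ys; split => [exy | ].
  have next a b : a \in s -> b \in s -> e a b -> index a s < index b s ->
      index b s = (index a s).+1.
    move=> a_s b_s eab lt; apply/eqP; rewrite eqn_leq lt andbT fwd ?sA //.
    by rewrite (leq_ltn_trans lt) ?index_mem.
  have : index x s != index y s.
    apply: contraTneq exy => /(congr1 (nth x0 s)); rewrite !nth_index // => ->.
    by rewrite e_irr.
  case: ltngtP => // [lt | gt] _.
    exists (index x s); rewrite -(next _ _ xs ys exy lt) index_mem ys.
    by split => //; left; rewrite !nth_index.
  exists (index y s); rewrite -(next _ _ ys xs _ gt) ?index_mem ?xs 1?e_sym //.
  by split => //; right; rewrite !nth_index.
case=> i [lt adj]; have e_i : e (nth x s i) (nth x s i.+1) := (pathP x pth) i lt.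
by case: adj => [[xi yi] | [yi xi]]; rewrite xi yi in e_i; rewrite // e_sym.
Qed.
End ForwardClosed.

Section ForcingChain.
Variables (T : finType) (e : rel T).
Variables (S W : {set T}) (w : T).
Hypothesis fenced_into_W : fenced e w (~: W).

(* [w :: t] lists the vertices of [W] colored after [k] rounds, in the order
   in which they were colored. *)
Definition forcing_chain k t := [/\ uniq (w :: t), path e w t,
  W :&: colored e S k =i w :: t & forward_closed e W (w :: t)].

Lemma forcing_chain_last k t z :
  w \in colored e S k -> forcing_chain k t ->
  z \in W -> z \in colored e S k.+1 -> z \notin colored e S k ->
  e (last w t) z /\ (forall y, e (last w t) y -> (y \in colored e S k) || (y == z)).
Proof.
move=> wk [_ _ memk fwd] zW zk1 zk.
have [y [yk eyz yz]] := force_stepP zk1 zk.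
have yW : y \in W.
  apply: contraT => yW; have zw : z = w by apply: fenced_into_W eyz; rewrite inE ?zW.
  by move: zk; rewrite zw wk.
have ys : y \in w :: t by rewrite -memk inE yW yk.
suff yl : y = last w t by rewrite -yl; split.
have [lt | ge] := ltnP (index y (w :: t)).+1 (size (w :: t)).
  have : z \in w :: t by rewrite -index_mem (leq_ltn_trans (fwd _ _ ys lt zW eyz)).
  by rewrite -memk inE (negbTE zk) andbF.
have iy : index y (w :: t) = size t.
  by move: ge (index_mem y (w :: t)); rewrite ys /=; lia.
by rewrite -(nth_index w ys) iy -[size t]/((size (w :: t)).-1) nth_last.
Qed.

Lemma forcing_chain_rcons k t z :
  w \in colored e S k -> forcing_chain k t ->
  z \in W -> z \in colored e S k.+1 -> z \notin colored e S k ->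
  forcing_chain k.+1 (rcons t z).
Proof.
move=> wk chain zW zk1 zk; have [uniq_s path_t memk fwd] := chain.
have [elz lastN] := forcing_chain_last wk chain zW zk1 zk.
have zs : z \notin w :: t by rewrite -memk inE (negbTE zk) andbF.
split; rewrite -?rcons_cons.
- by rewrite rcons_uniq zs.
- by rewrite rcons_path path_t elz.
- move=> y; rewrite mem_rcons in_cons -memk !in_setI.
  have [-> | yz] := eqVneq y z; first by rewrite zW zk1.
  have [yW | //] := boolP (y \in W).
  rewrite /=; apply/idP/idP => [yk1 | yk].
    apply: contraT => yk; have [ely _] := forcing_chain_last wk chain yW yk1 yk.
    by move: (lastN _ ely); rewrite (negbTE yk) (negbTE yz).
  by rewrite (subsetP (colored_mono e S (leqnSn k))).
- apply: forward_closed_rcons => // y yW /lastN /orP [yk | /eqP ->].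
    by rewrite mem_rcons inE -memk inE yW yk orbT.
  by rewrite mem_rcons inE eqxx.
Qed.

Lemma forcing_chain_step k t :
  w \in colored e S k -> forcing_chain k t -> exists t', forcing_chain k.+1 t'.
Proof.
move=> wk chain.
have [/existsP [z /and3P [zW zk1 zk]] | nonew] :=
  boolP [exists z, [&& z \in W, z \in colored e S k.+1 & z \notin colored e S k]].
  by exists (rcons t z); apply: forcing_chain_rcons.
exists t; have [uniq_s path_t memk fwd] := chain; split => // y.
rewrite -memk !in_setI; have [yW | //] := boolP (y \in W) => /=.
apply/idP/idP => [yk1 | /(subsetP (colored_mono e S (leqnSn k))) //].
apply: contraNT nonew => yk; apply/existsP; exists y; by rewrite yW yk1 yk.
Qed.

Lemma forcing_chain_after j t k :
  w \in colored e S j -> forcing_chain j t -> j <= k -> exists t', forcing_chain k t'.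
Proof.
move=> wj chain /subnKC <-; elim: (k - j) => [|n [t' chain']].
  by exists t; rewrite addn0.
rewrite addnS; apply: forcing_chain_step chain'.
exact: subsetP (colored_mono e S (leq_addr n j)) _ wj.
Qed.
End ForcingChain.

Section PendantChain.
Variables (T : finType) (e : rel T).
Hypotheses (e_sym : symmetric e) (e_irr : irreflexive e).
Implicit Types B W : {set T}.

Lemma forward_closed_behead W w t :
  w \notin t -> forward_closed e W (w :: t) -> forward_closed e (W :\ w) t.
Proof.
move=> wt fwd x z xt ixt; rewrite in_setD1 => /andP [zw zW] exz.
have xw : (w == x) = false by apply: contraNF wt => /eqP ->.
have wz : (w == z) = false by rewrite eq_sym (negbTE zw).
have := fwd x z; rewrite /= xw wz inE xt orbT !ltnS.
by apply.
Qed.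

Lemma forward_closed_head_nbr W w x1 rest z :
  forward_closed e W (w :: x1 :: rest) -> z \in W -> e w z -> z = x1.
Proof.
move=> fwd zW ewz; have := fwd w z (mem_head _ _); rewrite /= eqxx => /(_ isT zW ewz).
have [wz | _] := eqVneq w z; first by rewrite wz e_irr in ewz.
by have [-> | //] := eqVneq x1 z.
Qed.

Lemma nonseparable_sub_pair B w x :
  nonseparable e B -> w \in B -> w != x -> (forall z, z \in B -> e w z -> z = x) ->
  B \subset [set w; x].
Proof.
move=> [_ [cB cBv]] wB wx nbr; apply/subsetP => b bB; rewrite !inE.
apply: contraT; rewrite negb_or => /andP [bw bx].
have [C [sCB cC wC bC xC]] : exists C : {set T}, [/\ C \subset B, connected_set e C,
                                          w \in C, b \in C & x \notin C].
  have [xB | xB] := boolP (x \in B); last by exists B.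
  exists (B :\ x); split; [exact: subD1set | exact: cBv | | |];
    by rewrite !in_setD1 ?eqxx ?wB ?bB ?bx ?wx.
have bw' : b \notin [set w] by rewrite inE.
have [a [a' [_ a'C /set1P aw _ ewa']]] := connect_ind_exit (cC _ _ wC bC) (set11 w) bw'.
rewrite aw in ewa'; have a'x := nbr a' (subsetP sCB _ a'C) ewa'.
by move: a'C; rewrite a'x (negbTE xC).
Qed.

Lemma pendant_path_of_chain W w x1 rest :
  uniq (w :: x1 :: rest) -> path e w (x1 :: rest) -> W =i w :: x1 :: rest ->
  forward_closed e W (w :: x1 :: rest) -> fenced e w (W :\ w) ->
  pendant_path e w (W :\ w).
Proof.
set t := x1 :: rest => us pth memW fwd fP.
case/andP: us => wt ut; case/andP: pth => ewx1 pth1.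
have memP : W :\ w =i t.
  move=> z; rewrite in_setD1 memW in_cons.
  by have [-> | ] := eqVneq z w; rewrite ?(negbTE wt).
have x1P : x1 \in W :\ w by rewrite memP mem_head.
split; first by rewrite !inE eqxx.
split.
  apply: (connected_set_hub e_sym x1P) => y; rewrite memP => yt.
  apply: (path_connect _ yt); apply: (sub_in_path (P := mem (W :\ w))) pth1.
    by move=> a b aP bP eab; rewrite /ind_rel eab aP bP.
  by apply/allP => z; rewrite -memP.
split.
  by move=> x y xP yP yw; apply/negP => /(fP _ _ xP yP) /eqP; apply/negP.
exists x1, rest; split; last by rewrite ewx1.
split=> //; split=> //; split=> [z | x y]; first by rewrite memP.
rewrite !memP => xt yt.
apply: (forward_closed_seq_adj e_sym e_irr ut pth1 (forward_closed_behead wt fwd)) => // z.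
by rewrite memP.
Qed.

Lemma cut_edge_of_chain B W w x1 rest v :
  uniq (w :: x1 :: rest) -> path e w (x1 :: rest) -> W =i w :: x1 :: rest ->
  forward_closed e W (w :: x1 :: rest) -> fenced e w (W :\ w) ->
  nonseparable e B -> B \subset W -> w \in B -> v \in B -> v != w ->
  cut_edge_of_pendant_path e B.
Proof.
move=> us pth memW fwd fP nsB sBW wB vB vw.
have wx1 : w != x1 by apply: contraTneq us => ->; rewrite /= mem_head.
have ewx1 : e w x1 by case/andP: pth.
have sB : B \subset [set w; x1].
  apply: nonseparable_sub_pair nsB wB wx1 _ => z zB.
  exact: forward_closed_head_nbr fwd (subsetP sBW _ zB).
have vx1 : v = x1 by move: (subsetP sB _ vB); rewrite !inE (negbTE vw) => /eqP.
have x1W : x1 \in W by rewrite memW !inE eqxx orbT.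
exists w, (W :\ w), w, x1.
split; first exact: pendant_path_of_chain us pth memW fwd fP.
split=> //; split=> //; split; first exact: setU11.
split; first by rewrite !inE x1W andbT orbN.
apply/eqP; rewrite eqEsubset sB; apply/subsetP => z; rewrite !inE.
by case/orP => /eqP ->; rewrite -?vx1.
Qed.
End PendantChain.

Lemma bigmin_le (I : finType) (P : pred I) (F : I -> nat) m i :
  P i -> \big[minn/m]_(j | P j) F j <= F i.
Proof.
move=> Pi; elim: (index_enum I) (mem_index_enum i) => // j r IHr.
rewrite big_cons inE => /predU1P [<- | ir]; first by rewrite Pi geq_minl.
by case: (P j); rewrite ?geq_min IHr ?orbT.
Qed.

Lemma mindeg_le_deg (T : finType) (e : rel T) (B : {set T}) v :
  v \in B -> mindeg e B <= deg_in e B v.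
Proof. exact: bigmin_le. Qed.

Lemma deg_in_forcer_le (T : finType) (e : rel T) (B S : {set T}) u w :
  irreflexive e -> u \in S -> u \in B -> w \in B -> e u w ->
  (forall y, y \in B -> e u y -> y != w -> y \in S) ->
  deg_in e B u <= #|S :&: B|.
Proof.
move=> e_irr uS uB wB euw nbrS; set N := [set y in B | e u y].
have sub : u |: (N :\ w) \subset S :&: B.
  apply/subsetP => y; rewrite !inE => /orP [/eqP -> | /and3P [yw yB euy]].
    by rewrite uS uB.
  by rewrite nbrS.
apply: leq_trans (subset_leq_card sub).
by rewrite /deg_in -/N (cardsD1 w N) cardsU1 !inE wB euw e_irr !andbF.
Qed.

Section OutsideForcer.
Variables (T : finType) (e : rel T).
Hypotheses (e_sym : symmetric e) (e_irr : irreflexive e).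
Variables (S B : {set T}) (w u : T) (j : nat).
Hypotheses (connS : connected_set e S) (zfS : zero_forcing_set e S).
Hypotheses (blockB : block e B) (wB : w \in B) (uB : u \notin B) (euw : e u w).
Hypotheses (uj : u \in colored e S j) (wj : w \notin colored e S j).
Hypotheses (wj1 : w \in colored e S j.+1) (jT : j < #|T|).

Let Y := component e (~: [set w]) u.

Let uw : u != w. Proof. by apply: contraNneq uB => ->. Qed.

Let fY : fenced e w Y. Proof. exact: component_setC1_fenced. Qed.

Lemma seed_sub_forcer_component : S \subset Y.
Proof.
have [s sS sY] := fenced_meets_seed e_sym fY wj (component_id e _ u) uj.
apply/subsetP => x xS; apply: contraT => xY.
have wS : w \in S := fenced_connected_mem fY connS sS xS sY xY.
by move: wj; rewrite (subsetP (colored_mono e S (leq0n j)) _ wS).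
Qed.

Lemma forcing_chain_outside_component : exists t,
  [/\ uniq (w :: t), path e w t, ~: Y =i w :: t & forward_closed e (~: Y) (w :: t)].
Proof.
have fW : fenced e w (~: ~: Y) by rewrite setCK.
have dRS : [disjoint ~: Y :\ w & S].
  rewrite disjoint_subset; apply/subsetP => x; rewrite in_setD1 in_setC => /andP [_ xY].
  by rewrite inE; apply: contra xY; apply: (subsetP seed_sub_forcer_component).
have base : forcing_chain e S (~: Y) w j.+1 [::].
  split; [by [] | by [] | move=> y | by move=> x z; rewrite inE => /eqP ->].
  rewrite in_setI mem_seq1; have [-> | yw] := eqVneq y w.
    by rewrite wj1 in_setC notin_component_setC1.
  have := disjointFr (colored_fenced e_sym (fenced_setCD1 e_sym fY) dRS wj) (x := y).
  by rewrite in_setD1 yw /=; case: (y \in ~: Y) => // ->.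
have [t [us pth memk fwd]] := forcing_chain_after fW wj1 base jT.
exists t; split => // y; rewrite -memk in_setI.
by have -> : colored e S #|T| = setT := zfS; rewrite in_setT andbT.
Qed.

Lemma mindeg_eq0_of_outside_forcer : ~ cut_edge_of_pendant_path e B -> mindeg e B = 0.
Proof.
move=> notcut; case: (posnP (mindeg e B)) => // mpos; case: notcut.
have [t [us pth memW fwd]] := forcing_chain_outside_component.
have /set0Pn [v] : [set y in B | e w y] != set0.
  by rewrite -card_gt0 (leq_trans mpos (mindeg_le_deg _ wB)).
rewrite inE => /andP [vB ewv].
have vw : v != w by apply: contraTneq ewv => ->; rewrite e_irr.
have sBW : B \subset ~: Y.
  have dYB := block_disjoint_component_setC1 e_sym blockB wB uB euw.
  by apply/subsetP => b bB; rewrite inE (disjointFl dYB bB).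
case: t us pth memW fwd => [|x1 rest] us pth memW fwd.
  by move: (memW v); rewrite (subsetP sBW _ vB) inE (negbTE vw).
by apply: (cut_edge_of_chain e_sym e_irr us pth memW fwd (fenced_setCD1 e_sym fY)
                            (proj1 blockB) sBW wB vB).
Qed.
End OutsideForcer.

Theorem proposition3 (T : finType) (e : rel T)
  (e_sym : symmetric e) (e_irr : irreflexive e)
  (G_conn : connected_set e setT) (G_not_path : ~ is_path_graph e setT)
  (B : {set T}) (HB : block e B) (HBnot : ~ cut_edge_of_pendant_path e B)
  (S : {set T}) (HS : connected_forcing_set e S) :
  mindeg e B <= #|S :&: B|.
Proof.
case: HS => zfS connS.
have [sBS | /subsetPn [x xB xS]] := boolP (B \subset S).
  have /set0Pn [b bB] := proj1 (proj1 HB).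
  rewrite (setIidPr sBS); apply: leq_trans (mindeg_le_deg _ bB) _.
  by apply/subset_leq_card/subsetP => y; rewrite inE => /andP [].
have dXS : [disjoint B :\: S & S].
  by rewrite disjoint_subset; apply/subsetP => y; rewrite !inE => /andP [].
have xX : x \in B :\: S by rewrite inE xB xS.
have xT : x \in colored e S #|T| by rewrite [colored e S #|T|]zfS inE.
have [j [w [u [jT wX wj wj1 [dXj uj euw uN]]]]] := first_forced dXS xX xT.
have [wB _] := setDP wX.
have BjS y : y \in B -> y \in colored e S j -> y \in S.
  move=> yB yj; apply: contraT => yS; have yX : y \in B :\: S by rewrite inE yB yS.
  by move: yj; rewrite (disjointFr dXj yX).
have [uB | uB] := boolP (u \in B).
  apply: leq_trans (mindeg_le_deg _ uB) _.
  apply: (deg_in_forcer_le e_irr (BjS u uB uj) uB wB euw) => y yB euy yw.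
  by apply: BjS => //; move: (uN y euy); rewrite (negbTE yw) orbF.
by rewrite (mindeg_eq0_of_outside_forcer e_sym e_irr connS zfS HB wB uB euw
                                         uj wj wj1 jT HBnot).
Qed.
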